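(* Let $E$ and $E'$ be strongly independent equations in the unknowns $x_1,\dots,x_n$. Then there exist $k,l\in\{1,\dots,n\}$ with $t_{kl}^{E,E'}\ne0$.
   Context: An equation is a pair $(u,v)$ of words over $\{x_1,\dots,x_n\}$; a solution is a morphism $h:\{x_1,\dots,x_n\}^*\to\{a_1,\dots,a_r\}^*$ with $h(u)=h(v)$; its rank is the dimension of the $\mathbb Q$-span of the vectors $(|h(x_1)|_{a_i},\dots,|h(x_n)|_{a_i})$. $E,E'$ are strongly independent if $E$ has a solution of rank $n-1$ not solving $E'$ and $E'$ has a solution of rank $n-1$ not solving $E$. For $E=(x_{i_1}\cdots x_{i_r},\,x_{j_1}\cdots x_{j_s})$, $S_{E,x_j}=\sum_{a:\,i_a=j}\prod_{t=1}^{a-1}X_{i_t}-\sum_{a:\,j_a=j}\prod_{t=1}^{a-1}X_{j_t}\in\mathbb Z[X_1,\dots,X_n]$ (empty product $=1$), and $t_{kl}^{E,E'}=S_{E,x_k}S_{E',x_l}-S_{E',x_k}S_{E,x_l}$. *)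

From HB Require Import structures.
From mathcomp Require Import all_boot all_order all_algebra.
Set Implicit Arguments. Unset Strict Implicit. Unset Printing Implicit Defensive.
Import Order.TTheory GRing.Theory Num.Theory.

(* Unknowns x_1..x_n are 'I_n; letters a_1..a_r are 'I_r. *)
Definition word (n : nat) := seq 'I_n.
Definition equation (n : nat) := (word n * word n)%type.

Definition morph_apply n r (h : 'I_n -> seq 'I_r) (w : word n) : seq 'I_r :=
  flatten (map h w).

Definition is_solution n r (h : 'I_n -> seq 'I_r) (E : equation n) : Prop :=
  morph_apply h E.1 = morph_apply h E.2.

Definition parikh_mx n r (h : 'I_n -> seq 'I_r) : 'M[rat]_(r, n) :=
  \matrix_(i < r, j < n) ((count_mem i (h j))%:R : rat).

Definition sol_rank n r (h : 'I_n -> seq 'I_r) : nat := \rank (parikh_mx h).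

Definition strongly_independent n r (E E' : equation n) : Prop :=
  (exists h : 'I_n -> seq 'I_r,
      [/\ is_solution h E, sol_rank h = n.-1 & ~ is_solution h E'])
  /\ (exists h : 'I_n -> seq 'I_r,
      [/\ is_solution h E', sol_rank h = n.-1 & ~ is_solution h E]).

(* Polynomials in Z[X_1..X_n], represented as formal sums of monomials
   (exponent vector, integer coefficient); the polynomial is its
   coefficient function. *)
Definition monom (n : nat) := {ffun 'I_n -> nat}.
Definition mpoly (n : nat) := seq (monom n * int).

Definition mcoeff n (p : mpoly n) (m : monom n) : int :=
  (\sum_(t <- p | t.1 == m) t.2)%R.

Definition mpoly_nonzero n (p : mpoly n) : Prop := exists m, mcoeff p m != 0%R.

Definition madd n (p q : mpoly n) : mpoly n := p ++ q.
Definition mopp n (p : mpoly n) : mpoly n := [seq (t.1, (- t.2)%R) | t <- p].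
Definition msub n (p q : mpoly n) : mpoly n := madd p (mopp q).
Definition mmul n (p q : mpoly n) : mpoly n :=
  [seq ([ffun k => s.1 k + t.1 k] : monom n, (s.2 * t.2)%R) | s : monom n * int <- p, t : monom n * int <- q].

(* monomial prod_{t=1}^{a-1} X_{i_t} for the prefix of length a-1 of w
   (0-indexed: position a, prefix take a w) *)
Definition prefix_monom n (w : word n) (a : nat) : monom n :=
  [ffun k => count_mem k (take a w)].

Definition occ_sum n (w : word n) (j : 'I_n) : mpoly n :=
  [seq (prefix_monom w a, 1%R) | a <- iota 0 (size w) & nth j w a == j].

Definition S_poly n (E : equation n) (j : 'I_n) : mpoly n :=
  msub (occ_sum E.1 j) (occ_sum E.2 j).

Definition t_poly n (E E' : equation n) (k l : 'I_n) : mpoly n :=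
  msub (mmul (S_poly E k) (S_poly E' l)) (mmul (S_poly E' k) (S_poly E l)).

From HB Require Import structures.
From mathcomp Require Import all_boot all_order all_algebra.
From mathcomp Require Import ring zify.
From Stdlib Require Import Classical.
Set Implicit Arguments. Unset Strict Implicit. Unset Printing Implicit Defensive.
Import Order.TTheory GRing.Theory Num.Theory.
Local Open Scope ring_scope.

(* If every t_kl vanished, then evaluating at X_j := X^|h(x_j)|, for a solution h
   of E of rank n-1 that does not solve E', would make the vectors (S_{E,x_j})_j and
   (S_{E',x_j})_j proportional.  Encoding a word over the a_i as a polynomial (with
   coefficient i+1 for a_i), "h solves E" reads \sum_j S_{E,x_j} P_{h(x_j)} = 0, so
   h would solve E' unless all S_{E,x_j} vanish.  But rank n-1 allows at most one
   unknown with empty image, and then the S_{E,x_j} determine both sides of E;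
   so E would be trivial, contradicting that some solution of E' does not solve E. *)

(* Value of occ_sum w j at X := A, in Horner form. *)
Definition occ_val (R : nzSemiRingType) n (A : 'I_n -> R) (w : word n) (j : 'I_n) : R :=
  foldr (fun b acc => (b == j)%:R + A b * acc) 0 w.

Definition S_val (R : nzRingType) n (A : 'I_n -> R) (E : equation n) (j : 'I_n) : R :=
  occ_val A E.1 j - occ_val A E.2 j.

Section MpolyEval.
Variables (R : comNzRingType) (n : nat) (A : 'I_n -> R).

Definition mono (m : monom n) : R := \prod_k A k ^+ m k.
Definition meval (p : mpoly n) : R := \sum_(t <- p) t.2%:~R * mono t.1.

Lemma meval_add p q : meval (madd p q) = meval p + meval q.
Proof. by rewrite /meval /madd big_cat. Qed.

Lemma meval_opp p : meval (mopp p) = - meval p.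
Proof.
rewrite /meval /mopp big_map -sumrN; apply: eq_bigr => t _ /=.
by rewrite intrN mulNr.
Qed.

Lemma meval_sub p q : meval (msub p q) = meval p - meval q.
Proof. by rewrite /msub meval_add meval_opp. Qed.

Lemma mono_add (s t : monom n) : mono [ffun k => s k + t k] = mono s * mono t.
Proof. by rewrite /mono -big_split; apply: eq_bigr => k _; rewrite ffunE exprD. Qed.

Lemma meval_mul p q : meval (mmul p q) = meval p * meval q.
Proof.
rewrite /meval /mmul big_allpairs_dep mulr_suml; apply: eq_bigr => s _.
by rewrite mulr_sumr; apply: eq_bigr => t _ /=; rewrite mono_add intrM; ring.
Qed.

Lemma meval_eq0 p : (forall m, mcoeff p m = 0) -> meval p = 0.
Proof.
move=> p0; set U := undup [seq t.1 | t <- p].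
have single t : t \in p -> \sum_(m <- U | m == t.1) t.2%:~R * mono m = t.2%:~R * mono t.1.
  move=> tp; rewrite -big_filter (filter_pred1_uniq (undup_uniq _)) ?big_seq1 //.
  by rewrite mem_undup map_f.
rewrite /meval big_seq_cond (eq_bigr _ (fun t tp => esym (single t (andP tp).1))).
rewrite -big_seq_cond; under eq_bigr do rewrite big_mkcond.
rewrite exchange_big big1 // => m _.
rewrite -big_mkcond /= -mulr_suml; under eq_bigl do rewrite eq_sym.
by rewrite -(big_morph _ (intrD _) (mulr0z 1)) -/(mcoeff p m) p0 mul0r.
Qed.

Lemma mono_prefix0 w : mono (prefix_monom w 0) = 1.
Proof. by rewrite /mono big1 // => k _; rewrite ffunE take0. Qed.

Lemma mono_prefixS b w a :
  mono (prefix_monom (b :: w) a.+1) = A b * mono (prefix_monom w a).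
Proof.
rewrite /mono (bigD1 b) //= [in RHS](bigD1 b) //= !ffunE /= eqxx exprS mulrA.
by congr (_ * _); apply: eq_bigr => k kb; rewrite !ffunE /= eq_sym (negbTE kb).
Qed.

Lemma meval_occ_sum w j : meval (occ_sum w j) = occ_val A w j.
Proof.
have meval_occE v : meval (occ_sum v j) =
    \sum_(a <- iota 0 (size v) | nth j v a == j) mono (prefix_monom v a).
  by rewrite /meval big_map big_filter; apply: eq_bigr => a _; rewrite mul1r.
elim: w => [|b w IH]; first by rewrite meval_occE big_nil.
rewrite meval_occE /= big_cons /= mono_prefix0 -[1%N]addn0 iotaDl big_map.
rewrite -IH meval_occE mulr_sumr.
under eq_bigr do rewrite add1n mono_prefixS.
by case: (b == j); rewrite ?add0r.
Qed.

Lemma meval_S_poly E j : meval (S_poly E j) = S_val A E j.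
Proof. by rewrite meval_sub !meval_occ_sum. Qed.

Lemma meval_t_poly E E' k l :
  meval (t_poly E E' k l) = S_val A E k * S_val A E' l - S_val A E' k * S_val A E l.
Proof. by rewrite meval_sub !meval_mul !meval_S_poly. Qed.

End MpolyEval.

Section WordPoly.
Variable R : numDomainType.

Definition word_poly r (w : seq 'I_r) : {poly R} :=
  foldr (fun (a : 'I_r) p => a.+1%:R%:P + 'X * p) 0 w.

Lemma word_poly_cat r (w1 w2 : seq 'I_r) :
  word_poly (w1 ++ w2) = word_poly w1 + 'X^(size w1) * word_poly w2.
Proof. by elim: w1 => [|a w IH] /=; rewrite ?add0r ?mul1r // IH exprS; ring. Qed.

Lemma word_poly_coef0 r (a : 'I_r) w : (word_poly (a :: w))`_0 = a.+1%:R.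
Proof. by rewrite coefD coefC coefXM addr0. Qed.

Lemma word_poly_inj r : injective (@word_poly r).
Proof.
elim=> [|a u IH] [|b v] // eq_uv; have := congr1 (fun p : {poly R} => p`_0) eq_uv.
- by rewrite coef0 word_poly_coef0 => /eqP; rewrite eq_sym pnatr_eq0.
- by rewrite coef0 word_poly_coef0 => /eqP; rewrite pnatr_eq0.
rewrite !word_poly_coef0 => /eqP; rewrite eqr_nat eqSS => /eqP/val_inj eq_ab; subst b.
have X_neq0 : 'X != 0 :> {poly R} by rewrite polyX_eq0.
by congr (_ :: _); apply/IH/(mulfI X_neq0)/(addrI _ eq_uv).
Qed.

Definition Xsize n r (h : 'I_n -> seq 'I_r) (j : 'I_n) : {poly R} := 'X^(size (h j)).

Lemma word_poly_morph n r (h : 'I_n -> seq 'I_r) u :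
  word_poly (morph_apply h u) = \sum_j occ_val (Xsize h) u j * word_poly (h j).
Proof.
elim: u => [|b u IH]; first by rewrite big1 // => j _; rewrite mul0r.
rewrite /morph_apply /= word_poly_cat -/(morph_apply h u) IH mulr_sumr.
under [RHS]eq_bigr do rewrite mulrDl -mulrA.
rewrite big_split /=; congr (_ + _).
rewrite (bigD1 b) //= eqxx mul1r big1 ?addr0 // => j jb.
by rewrite eq_sym (negbTE jb) mul0r.
Qed.

Lemma solutionP n r (h : 'I_n -> seq 'I_r) E :
  is_solution h E <-> \sum_j S_val (Xsize h) E j * word_poly (h j) = 0.
Proof.
rewrite /is_solution; under eq_bigr do rewrite mulrBl.
rewrite sumrB -!word_poly_morph.
by split=> [->|/eqP]; rewrite ?subrr // subr_eq0 => /eqP/word_poly_inj.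
Qed.

End WordPoly.

Section OccValNonneg.
Variables (R : numDomainType) (n : nat) (c : 'I_n -> R).
Hypothesis c_ge0 : forall i, 0 <= c i.

Lemma occ_val_ge0 w j : 0 <= occ_val c w j.
Proof. by elim: w => [|b w IH] //=; rewrite addr_ge0 ?mulr_ge0 ?ler0n. Qed.

Lemma occ_val_cons_ge1 b w : 1 <= occ_val c (b :: w) b.
Proof. by rewrite /= eqxx lerDl mulr_ge0 ?occ_val_ge0. Qed.

End OccValNonneg.

Section OccValInj.
Variables (R : numDomainType) (n r : nat) (h : 'I_n -> seq 'I_r).
Hypothesis nil_uniq : forall i j, h i = [::] -> h j = [::] -> i = j.

Let c := occ_val (fun i => (size (h i) == 0%N)%:R : R).

Lemma horner0_occ_val_Xsize w j : (occ_val (Xsize R h) w j).[0] = c w j.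
Proof.
elim: w => [|b w IH]; first by rewrite horner0.
by rewrite /= hornerD hornerM hornerXn expr0n -IH hornerMn hornerC.
Qed.

Lemma occ_val_cons_other a w j : a != j -> size (h a) != 0%N -> c (a :: w) j = 0.
Proof. by move=> /negbTE aj /negbTE ha; rewrite /c /= aj ha mul0r addr0. Qed.

(* The constant terms of the occ_val's reveal the first letters of u and v. *)
Lemma occ_val_Xsize_inj u v :
  (forall j, occ_val (Xsize R h) u j = occ_val (Xsize R h) v j) -> u = v.
Proof.
have c_ge1 := occ_val_cons_ge1 (fun i => ler0n R (size (h i) == 0%N)).
have c_eq u' v' : (forall j, occ_val (Xsize R h) u' j = occ_val (Xsize R h) v' j) ->
    forall j, c u' j = c v' j.
  by move=> eq_uv j; rewrite -!horner0_occ_val_Xsize eq_uv.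
elim: u v => [|a u IH] [|b v] // eq_uv; move: (c_eq _ _ eq_uv) => {}c_eq.
- by have := c_ge1 b v; rewrite -/c -c_eq ler10.
- by have := c_ge1 a u; rewrite -/c c_eq ler10.
have [eq_ab|ab] := eqVneq a b.
  subst b.
  have Xa_neq0 : Xsize R h a != 0 by rewrite expf_neq0 // polyX_eq0.
  congr (_ :: _); apply: IH => j; have /= eq_j := eq_uv j.
  apply: (mulfI Xa_neq0); exact: (addrI _ eq_j).
have [ha|ha] := eqVneq (size (h a)) 0%N.
  have hb : size (h b) != 0%N.
    by apply: contra_neq ab => /size0nil hb; apply: nil_uniq hb; apply: size0nil.
  by have := c_ge1 a u; rewrite -/c c_eq occ_val_cons_other ?ler10 // eq_sym.
by have := c_ge1 b v; rewrite -/c -c_eq occ_val_cons_other ?ler10.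
Qed.

End OccValInj.

Lemma mxrank_le_card_cols (F : fieldType) m n (M : 'M[F]_(m, n)) (J : {set 'I_n}) :
  (forall i j, j \notin J -> M i j = 0) -> (\rank M <= #|J|)%N.
Proof.
move=> M_J; have -> : M = \sum_(j in J) M *m delta_mx j j.
  rewrite -[M in LHS]mulmx1 mx1_sum_delta mulmx_sumr.
  rewrite (bigID (mem J)) /= addrC big1 ?add0r // => j /M_J M_j0.
  apply/matrixP => a b; rewrite !mxE big1 // => k _; rewrite !mxE.
  by case: (eqVneq k j) => [->|]; rewrite ?M_j0 ?mul0r ?mulr0.
rewrite -sum1_card; elim/big_ind2: _ => [|M1 k1 M2 k2 le1 le2|j _].
- by rewrite mxrank0.
- exact: leq_trans (mxrank_add _ _) (leq_add le1 le2).
- by rewrite (leq_trans (mxrankM_maxr _ _)) ?mxrank_delta.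
Qed.

Lemma sol_rank_nil_uniq n r (h : 'I_n -> seq 'I_r) :
  sol_rank h = n.-1 -> forall i j, h i = [::] -> h j = [::] -> i = j.
Proof.
move=> rk i j hi hj; apply/eqP/negP => /negP ij.
have : (sol_rank h <= #|~: [set i; j]|)%N.
  apply: mxrank_le_card_cols => a k; rewrite !inE negbK mxE.
  by case/orP=> /eqP ->; rewrite ?hi ?hj.
rewrite rk cardsCs setCK cards2 ij card_ord.
have := ltn_ord i; have := ltn_ord j; have : (i : nat) != j := ij; lia.
Qed.

Lemma proportional_sum_eq0 (R : idomainType) (I : finType) (s s' F : I -> R) k :
  s k != 0 -> (forall k l, s k * s' l = s' k * s l) ->
  \sum_j s j * F j = 0 -> \sum_j s' j * F j = 0.
Proof.
move=> sk_neq0 prop sF0; apply: (mulfI sk_neq0).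
rewrite mulr0 mulr_sumr (eq_bigr (fun j => s' k * (s j * F j))).
  by rewrite -mulr_sumr sF0 mulr0.
by move=> j _; rewrite !mulrA prop.
Qed.

Theorem lemma4p3 (n r : nat) (E E' : equation n) :
  strongly_independent r E E' ->
  exists k l : 'I_n, mpoly_nonzero (t_poly E E' k l).
Proof.
move=> [[h [solE rk nsolE']] [? [_ _ nsolE]]].
have E_nontriv : E.1 <> E.2 by move=> eqE; apply: nsolE; rewrite /is_solution eqE.
apply: NNPP => t_zero.
pose s := S_val (Xsize int h) E; pose s' := S_val (Xsize int h) E'.
have prop k l : s k * s' l = s' k * s l.
  apply/eqP; rewrite -subr_eq0 -meval_t_poly meval_eq0 // => m.
  by apply/eqP/negPn/negP => tm; apply: t_zero; exists k, l, m.
have [k sk_neq0 | s_eq0] := pickP (fun k => s k != 0).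
  by apply/nsolE'/solutionP/(proportional_sum_eq0 sk_neq0 prop)/solutionP.
apply/E_nontriv/(occ_val_Xsize_inj (sol_rank_nil_uniq rk)) => j.
exact/subr0_eq/eqP/negbFE/s_eq0.
Qed.
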